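(* For every positive integer $n$, the number of circular permutations of $[n]=\{1,2,\ldots,n\}$ that avoid the pattern $1324$ equals the Fibonacci number $F_{2n-3}$.
   Context: A circular permutation of $[n]$ is an arrangement of $1,2,\ldots,n$ clockwise around a circle, two arrangements being identified if they differ by a rotation. Equivalently, it can be represented uniquely as a linear permutation $\pi_1\pi_2\cdots\pi_n$ of $[n]$ with $\pi_n=n$, whose rotations $\pi_i\pi_{i+1}\cdots\pi_n\pi_1\cdots\pi_{i-1}$ all represent the same circular permutation. The reduced form of a sequence of distinct positive integers is obtained by replacing its smallest entry by $1$, its next smallest by $2$, and so on; a pattern is such a reduced form. An occurrence of a pattern $\tau$ of length $m$ in a circular permutation $\pi$ is a sequence of $m$ letters of $\pi$ read in clockwise order and lying within one revolution (i.e., a subsequence of some rotation of the linear representation) whose reduced form is $\tau$; $\pi$ avoids $\tau$ if it has no occurrence of $\tau$. Fibonacci numbers: $F_1=F_2=1$, $F_{m+1}=F_m+F_{m-1}$, extended to negative index by the same recurrence, so $F_{-1}=1$. *)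

From mathcomp Require Import all_boot all_order all_algebra.
Set Implicit Arguments. Unset Strict Implicit. Unset Printing Implicit Defensive.

Fixpoint fib (m : nat) : nat :=
  match m with
  | 0 => 0
  | 1 => 1
  | (m'.+1 as k).+1 => fib k + fib m'
  end.

(* Extension to integer indices by the same recurrence:
   F_{-k} = (-1)^(k+1) F_k.  Negz m stands for -(m+1). *)
Definition fibz (z : int) : int :=
  match z with
  | Posz m => (fib m)%:Z
  | Negz m => ((-1) ^+ m * (fib m.+1)%:Z)%R
  end.

Definition reduce (s : seq nat) : seq nat :=
  [seq count (fun y => y <= x) s | x <- s].

(* Linear representations of circular permutations of [n]:
   permutations pi_1 ... pi_n of 1..n with pi_n = n. *)
Definition circ_perms (n : nat) : seq (seq nat) :=
  [seq s <- permutations (iota 1 n) | last 0 s == n].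

Definition circ_contains (tau pi : seq nat) : bool :=
  [exists i : 'I_(size pi), exists m : (size pi).-tuple bool,
      reduce (mask m (rot i pi)) == tau].

Definition circ_avoids (tau pi : seq nat) : bool := ~~ circ_contains tau pi.

From mathcomp Require Import all_boot all_order all_algebra zify.
Set Implicit Arguments. Unset Strict Implicit. Unset Printing Implicit Defensive.

(* A circular permutation of [m+1] is x (m+1) with x a permutation of [m].
   An occurrence of 1324 in it either uses m+1, necessarily as its 4, and then
   its other three letters form a 132 in x; or it lies in x, where it reads as
   one of the rotations 1324, 3241, 2413, 4132, which contain 132, 3241, 2413,
   132 respectively.  So x (m+1) avoids 1324 iff x avoids 132, 2413 and 3241;
   call such an x admissible.
   In an admissible permutation of [m+1], either m+1 comes last, or every letter
   before m+1 exceeds every letter after it (no 132) and the letters before m+1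
   increase (no 3241); then x = (j+1) (j+2) ... (m+1) y with 1 <= j <= m and y
   an admissible permutation of [j].  Hence the numbers a_m of admissible
   permutations of [m] satisfy a_0 = 1, a_(m+1) = a_m + a_1 + ... + a_m, and
   F_1 + F_3 + ... + F_(2m-1) = F_(2m) gives a_m = F_(2m-1) for m >= 1. *)

Section Subsequences.

Variable T : eqType.
Implicit Types s t u v x y : seq T.

Lemma subseq_cat_split t s1 s2 : subseq t (s1 ++ s2) ->
  exists t1 t2, [/\ t = t1 ++ t2, subseq t1 s1 & subseq t2 s2].
Proof.
case/subseqP=> m sz ->; exists (mask (take (size s1) m) s1), (mask (drop (size s1) m) s2).
split; rewrite ?mask_subseq // -mask_cat ?cat_take_drop // size_take sz size_cat.
by case: ltnP => //; lia.
Qed.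

Lemma cat_subseq_split u v s : subseq (u ++ v) s ->
  exists s1 s2, [/\ s = s1 ++ s2, subseq u s1 & subseq v s2].
Proof.
elim: s u => [|z s IH] [|a u] /=.
- by exists [::], [::].
- by [].
- by exists [::], (z :: s).
case: eqP => [-> | _] sub.
  by have [s1 [s2 [-> sub1 sub2]]] := IH u sub; exists (z :: s1), s2; rewrite /= eqxx.
have [s1 [s2 [-> sub1 sub2]]] := IH (a :: u) sub; exists (z :: s1), s2.
by split=> //; apply: subseq_trans sub1 (subseq_cons _ _).
Qed.

Lemma subseq_rotP t y :
  (exists i, subseq t (rot i y)) <-> exists u v, t = u ++ v /\ subseq (v ++ u) y.
Proof.
split=> [[i] | [u [v [-> /cat_subseq_split [y1 [y2 [-> sub_v sub_u]]]]]]].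
  case/subseq_cat_split=> [u [v [-> sub_u sub_v]]]; exists u, v; split=> //.
  by rewrite -(cat_take_drop i y) cat_subseq.
by exists (size y1); rewrite rot_size_cat cat_subseq.
Qed.

Lemma subseq_rcons_inv s x z : subseq s (rcons x z) ->
  subseq s x \/ exists2 u, s = rcons u z & subseq u x.
Proof.
rewrite -cats1 => /subseq_cat_split [s1 [[|w [|w' s2]] [-> sub1]]].
- by rewrite cats0; left.
- by rewrite sub1seq mem_seq1 => /eqP ->; right; exists s1; rewrite ?cats1.
- by move/size_subseq.
Qed.

Lemma subseq_rcons_neq s x z : subseq s (rcons x z) -> last z s != z -> subseq s x.
Proof. by case/subseq_rcons_inv=> // -[u -> _]; rewrite last_rcons eqxx. Qed.

Lemma pairwise_subseq2 (r : rel T) s :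
  (forall a b, subseq [:: a; b] s -> r a b) -> pairwise r s.
Proof.
elim: s => //= a s IH r2; apply/andP; split.
  by apply/allP=> b b_s; apply: r2; rewrite /= eqxx sub1seq.
by apply: IH => b c bc; apply: r2; apply: subseq_trans bc (subseq_cons _ _).
Qed.

End Subsequences.

Lemma iota1S m : iota 1 m.+1 = rcons (iota 1 m) m.+1.
Proof. by rewrite -[m.+1]addn1 iotaD cats1 addnC. Qed.

Lemma perm_iota_max m s1 s2 :
  perm_eq (s1 ++ m.+1 :: s2) (iota 1 m.+1) = perm_eq (s1 ++ s2) (iota 1 m).
Proof. by rewrite -cat1s perm_catCA perm_sym iota1S perm_rcons perm_cons perm_sym. Qed.

Lemma perm_iota_lt m x : perm_eq x (iota 1 m) -> all (fun y => y < m.+1) x.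
Proof. by move/perm_all=> ->; apply/allP=> y; rewrite mem_iota; lia. Qed.

Lemma perm_iota_sorted_cat k n s1 s2 : perm_eq (s1 ++ s2) (iota k n) ->
  pairwise leq s2 -> allrel leq s1 s2 ->
  s2 = iota (k + size s1) (n - size s1) /\ perm_eq s1 (iota k (size s1)).
Proof.
move=> perm12 sorted2 le12.
have sorted_cat : sorted leq (sort leq s1 ++ s2).
  rewrite (sorted_pairwise leq_trans) pairwise_cat sorted2 andbT.
  rewrite -(sorted_pairwise leq_trans) (sort_sorted leq_total) andbT.
  by rewrite /allrel (perm_all _ (permEl (perm_sort _ _))).
have sorted_iota : sort leq s1 ++ s2 = iota k n.
  apply: (sorted_eq leq_trans anti_leq) sorted_cat (iota_sorted k n) _.
  by apply: perm_trans perm12; rewrite perm_cat2r; apply/permEl/perm_sort.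
have size1 : size (sort leq s1) = size s1 by rewrite size_sort.
split; first by rewrite -drop_iota -sorted_iota drop_size_cat.
rewrite -(perm_sort leq) -(take_size_cat s2 size1) sorted_iota take_iota.
by rewrite (minn_idPl _) // -(size_iota k n) -sorted_iota size_cat size1 leq_addr.
Qed.

(* Occurrences of the patterns 132, 2413 and 3241. *)
Definition obstruction (t : seq nat) : bool :=
  match t with
  | [:: x1; x2; x3] => x1 < x3 < x2
  | [:: x1; x2; x3; x4] => (x3 < x1 < x4) && (x4 < x2) || (x4 < x2 < x1) && (x1 < x3)
  | _ => false
  end.

Definition admissible (x : seq nat) : bool :=
  [forall m : (size x).-tuple bool, ~~ obstruction (mask m x)].

Lemma admissibleP x : reflect (forall t, subseq t x -> ~~ obstruction t) (admissible x).
Proof.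
apply: (iffP forallP) => [adm t /subseqP [m sz ->] | adm m]; last exact/adm/mask_subseq.
have sz' : size m == size x by rewrite sz.
exact: (adm (Tuple sz')).
Qed.

Lemma admissiblePn x : reflect (exists2 t, subseq t x & obstruction t) (~~ admissible x).
Proof.
apply: (iffP idP) => [| [t sub obs]]; last by apply/admissibleP => /(_ t sub); rewrite obs.
by rewrite negb_forall => /existsP [m]; rewrite negbK; exists (mask m x); rewrite ?mask_subseq.
Qed.

Lemma admissible_nil : admissible [::].
Proof. by apply/admissibleP => t; rewrite subseq0 => /eqP ->. Qed.

Lemma admissible_subseq y x : subseq y x -> admissible x -> admissible y.
Proof.
by move=> sub_yx /admissibleP adm; apply/admissibleP => t /subseq_trans /(_ sub_yx) /adm.
Qed.

Lemma obstruction_rcons_max u N : all (fun y => y < N) u -> ~~ obstruction (rcons u N).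
Proof. by case: u => [|a [|b [|c [|d [|e u]]]]] //=; lia. Qed.

Lemma admissible_rcons_max x N :
  all (fun y => y < N) x -> admissible x -> admissible (rcons x N).
Proof.
move=> /allP x_lt /admissibleP adm; apply/admissibleP => t.
case/subseq_rcons_inv=> [/adm // | [u -> /subseqP [m _ ->]]].
by apply/obstruction_rcons_max/allP => y /(mem_subseq (mask_subseq m x)) /x_lt.
Qed.

Lemma obstruction_skew u v : u != [::] -> pairwise leq u -> allrel geq u v ->
  ~~ obstruction (u ++ v).
Proof.
rewrite /allrel.
by case: u => [//|a [|b [|c [|d [|e u]]]]]; case: v => [|x [|y [|z [|w v]]]] //=; lia.
Qed.

Lemma admissible_skew u v : admissible v -> pairwise leq u -> allrel geq u v ->
  admissible (u ++ v).
Proof.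
move=> /admissibleP adm sorted_u ge_uv; apply/admissibleP => t.
case/subseq_cat_split=> t1 [t2 [-> /subseqP [m1 _ ->] /subseqP [m2 _ ->]]].
have [-> | /obstruction_skew -> //] := eqVneq (mask m1 u) [::].
  exact/adm/mask_subseq.
- exact: pairwise_mask.
- exact/allrel_maskl/allrel_maskr.
Qed.

Lemma admissible_max_split al be N :
  admissible (al ++ N :: be) -> uniq (al ++ be) -> all (fun y => y < N) (al ++ be) ->
  be != [::] -> pairwise leq (rcons al N) /\ allrel geq (rcons al N) be.
Proof.
move=> /admissibleP adm; rewrite cat_uniq all_cat => /and3P [_ al'be _].
move=> /andP [/allP al_lt /allP be_lt].
have be_lt_al u w : u \in al -> w \in be -> w < u.
  move=> u_al w_be; rewrite ltn_neqAle; apply/andP; split.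
    by apply: contraNneq al'be => eq_wu; apply/hasP; exists w; rewrite // eq_wu.
  have sub : subseq [:: u; N; w] (al ++ N :: be).
    by rewrite -[[:: u; N; w]]/([:: u] ++ [:: N; w]) cat_subseq ?sub1seq //= eqxx sub1seq.
  by rewrite leqNgt; apply: contraNN (adm _ sub) => /= ->; rewrite be_lt.
case: be => [//|v be] in al'be be_lt be_lt_al adm * => _.
split.
  rewrite pairwise_rcons; apply/andP; split.
    by apply/allP => u /al_lt /ltnW.
  apply: pairwise_subseq2 => b c sub_bc.
  have sub : subseq [:: b; c; N; v] (al ++ N :: v :: be).
    by rewrite -[[:: b; c; N; v]]/([:: b; c] ++ [:: N; v]) cat_subseq //= eqxx /= eqxx sub0seq.
  have [b_al c_al] : b \in al /\ c \in al.
    by split; apply: (mem_subseq sub_bc); rewrite !inE eqxx ?orbT.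
  rewrite leqNgt; apply: contraNN (adm _ sub) => /= ->.
  by rewrite (be_lt_al c v) ?mem_head ?al_lt ?orbT.
rewrite -cats1 allrel_catl allrel1l; apply/andP; split.
  by apply/allrelP => u w u_al /(be_lt_al _ _ u_al) /ltnW.
by apply/allP => w /be_lt /ltnW.
Qed.

Lemma admissible_perm_cases m x : perm_eq x (iota 1 m.+1) -> admissible x ->
  (exists2 y, x = rcons y m.+1 & perm_eq y (iota 1 m)) \/
  exists j y, [/\ 0 < j <= m, x = iota j.+1 (m.+1 - j) ++ y & perm_eq y (iota 1 j)].
Proof.
move=> x_perm adm; have x_max : m.+1 \in x by rewrite (perm_mem x_perm) mem_iota; lia.
case/splitPr: x_max x_perm adm => al be; rewrite perm_iota_max => albe_perm adm.
have [be_nil | be_nil] := eqVneq be [::].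
  by left; exists al; [rewrite be_nil cats1 | rewrite -(cats0 al) -be_nil].
right; have albe_uniq : uniq (al ++ be) by rewrite (perm_uniq albe_perm) iota_uniq.
have [al_sorted al_ge_be] :=
  admissible_max_split adm albe_uniq (perm_iota_lt albe_perm) be_nil.
have [al_iota be_perm] : rcons al m.+1 = iota (1 + size be) (m.+1 - size be) /\
    perm_eq be (iota 1 (size be)).
  apply: perm_iota_sorted_cat => //; last by rewrite allrelC.
  by rewrite perm_catC cat_rcons perm_iota_max.
exists (size be), be; rewrite -cat_rcons al_iota; split => //.
by have := perm_size albe_perm; rewrite size_cat size_iota lt0n size_eq0 be_nil; lia.
Qed.

Definition adm_perms m := [seq x <- permutations (iota 1 m) | admissible x].

Lemma mem_adm_perms m x : (x \in adm_perms m) = perm_eq x (iota 1 m) && admissible x.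
Proof. by rewrite mem_filter mem_permutations andbC. Qed.

Lemma adm_perms_uniq m : uniq (adm_perms m).
Proof. by rewrite filter_uniq ?permutations_uniq. Qed.

Definition adm_perms_decomp m :=
  [seq rcons y m.+1 | y <- adm_perms m] ++
  [seq iota j.+1 (m.+1 - j) ++ y | j <- iota 1 m, y <- adm_perms j].

Lemma adm_perms_decomp_sub m : {subset adm_perms_decomp m <= adm_perms m.+1}.
Proof.
move=> x; rewrite mem_cat mem_adm_perms.
case/orP=> [/mapP [y] | /allpairsPdep [j [y [j_m]]]];
  rewrite mem_adm_perms => /andP [y_perm y_adm] ->.
  rewrite -cats1 perm_iota_max cats0 y_perm.
  by rewrite cats1 admissible_rcons_max // perm_iota_lt.
rewrite mem_iota in j_m; apply/andP; split.
  have -> : iota 1 m.+1 = iota 1 j ++ iota j.+1 (m.+1 - j).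
    by rewrite -[j.+1]add1n -iotaD subnKC //; lia.
  by rewrite perm_catC perm_cat2r.
apply: admissible_skew y_adm _ _; first by rewrite -(sorted_pairwise leq_trans) iota_sorted.
apply/allrelP => u w; rewrite mem_iota (perm_mem y_perm) mem_iota /=; lia.
Qed.

Lemma adm_perms_sub_decomp m : {subset adm_perms m.+1 <= adm_perms_decomp m}.
Proof.
move=> x; rewrite mem_adm_perms mem_cat => /andP [x_perm x_adm].
case: (admissible_perm_cases x_perm x_adm) => [[y x_eq y_perm] | [j [y [j_m x_eq y_perm]]]].
  apply/orP; left; apply/mapP; exists y => //; rewrite mem_adm_perms y_perm.
  by apply: admissible_subseq x_adm; rewrite x_eq subseq_rcons.
apply/orP; right; apply/allpairsPdep; exists j, y; rewrite mem_iota mem_adm_perms y_perm.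
by split=> //=; apply: admissible_subseq x_adm; rewrite x_eq suffix_subseq.
Qed.

Lemma adm_perms_decomp_uniq m : uniq (adm_perms_decomp m).
Proof.
have last_skew j y : 0 < j <= m -> y \in adm_perms j ->
    last 0 (iota j.+1 (m.+1 - j) ++ y) < m.+1.
  move=> j_m; rewrite mem_adm_perms => /andP [y_perm _].
  case: y y_perm => [/perm_size | z y /perm_iota_lt /allP y_lt].
    by rewrite size_iota /=; lia.
  rewrite last_cat /=; apply: leq_trans (y_lt _ (mem_last z y)) _.
  by rewrite ltnS; case/andP: j_m.
rewrite cat_uniq (map_inj_uniq (@rcons_injl _ _)) adm_perms_uniq /=; apply/andP; split.
  apply/hasPn => _ /allpairsPdep [j [y [j_m y_adm ->]]]; apply/mapP => -[z _ eq_zy].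
  have j_m' : 0 < j <= m by rewrite mem_iota in j_m; lia.
  by have := last_skew j y j_m' y_adm; rewrite eq_zy last_rcons ltnn.
apply: allpairs_uniq_dep => [|j _|]; rewrite ?iota_uniq ?adm_perms_uniq //.
move=> [j1 y1] [j2 y2] /allpairsPdep [j1' [_ [j1_m _ /(congr1 tag) /= eq_j1]]].
move=> /allpairsPdep [j2' [_ [j2_m _ /(congr1 tag) /= eq_j2]]] /=.
subst j1' j2'; rewrite !mem_iota in j1_m j2_m.
have [k1 k2] : m.+1 - j1 = (m - j1).+1 /\ m.+1 - j2 = (m - j2).+1 by split; lia.
move=> eq12; have eq_j : j1 = j2 by move: (congr1 (head 0) eq12); rewrite k1 k2 => -[].
by subst j2; move/eqP: eq12; rewrite eqseq_cat // => /andP [_ /eqP ->].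
Qed.

Lemma size_adm_perms_S m : size (adm_perms m.+1) =
  size (adm_perms m) + sumn [seq size (adm_perms j) | j <- iota 1 m].
Proof.
have decomp : perm_eq (adm_perms_decomp m) (adm_perms m.+1).
  apply: uniq_perm; rewrite ?adm_perms_decomp_uniq ?adm_perms_uniq // => x.
  by apply/idP/idP => [/adm_perms_decomp_sub | /adm_perms_sub_decomp].
by rewrite -(perm_size decomp) size_cat size_map size_allpairs_dep.
Qed.

Lemma fibSS n : fib n.+2 = fib n.+1 + fib n.
Proof. by []. Qed.

Lemma sum_fib_odd m : sumn [seq fib (2 * j).-1 | j <- iota 1 m] = fib (2 * m).
Proof.
elim: m => // m IH; rewrite iota1S map_rcons sumn_rcons IH.
by rewrite mulnS add2n fibSS addnC.
Qed.

Lemma size_adm_perms0 : size (adm_perms 0) = 1.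
Proof. by rewrite /adm_perms /= admissible_nil. Qed.

Lemma size_adm_perms m : 0 < m -> size (adm_perms m) = fib (2 * m).-1.
Proof.
elim/ltn_ind: m => -[//|m] IH _; rewrite size_adm_perms_S.
case: m IH => [|m] IH; first by rewrite size_adm_perms0.
have -> : [seq size (adm_perms j) | j <- iota 1 m.+1] =
          [seq fib (2 * j).-1 | j <- iota 1 m.+1].
  by apply/eq_in_map => j; rewrite mem_iota => j_m; apply: IH; lia.
by rewrite sum_fib_odd IH // !mulnS !add2n [in RHS]fibSS addnC.
Qed.

Lemma circ_containsP a p pi :
  reflect (exists u v, subseq (v ++ u) pi /\ reduce (u ++ v) = a :: p)
          (circ_contains (a :: p) pi).
Proof.
apply: (iffP existsP) => [[i /existsP [m /eqP red]] | [u [v [sub red]]]].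
  have [|u [v [eq_uv sub]]] := (subseq_rotP (mask m (rot i pi)) pi).1.
    by exists i; apply: mask_subseq.
  by exists u, v; rewrite -eq_uv.
have [i /subseqP [m sz_m eq_uv]] : exists i, subseq (u ++ v) (rot i pi).
  by apply/subseq_rotP; exists u, v.
have pi_nil : 0 < size pi.
  have := congr1 size red; rewrite /reduce size_map => sz_uv.
  apply: leq_trans _ (size_subseq sub).
  by rewrite size_cat addnC -size_cat sz_uv.
wlog lt_i : i m sz_m eq_uv / i < size pi.
  move=> gen; have [|le_i] := ltnP i (size pi); first exact: gen i m sz_m eq_uv.
  rewrite (rot_oversize le_i) -(rot0 pi) in sz_m eq_uv; exact: gen 0 m sz_m eq_uv pi_nil.
have sz_m' : size m == size pi by rewrite sz_m size_rot.
by exists (Ordinal lt_i); apply/existsP; exists (Tuple sz_m'); rewrite /= -eq_uv red.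
Qed.

Lemma reduce1324 t : reduce t = [:: 1; 3; 2; 4] <->
  exists a b c d, t = [:: a; b; c; d] /\ [/\ a < c, c < b & b < d].
Proof.
split=> [|[a [b [c [d [-> [ac cb bd]]]]]]]; last first.
  by rewrite /reduce /=; congr [:: _; _; _; _]; lia.
case: t => [|a [|b [|c [|d [|e t]]]]] // [] /= *.
by exists a, b, c, d; split=> //; split; lia.
Qed.

Lemma obstruction_circ_occurrence t N : obstruction t -> all (fun y => y < N) t ->
  exists u v, subseq (v ++ u) (rcons t N) /\ reduce (u ++ v) = [:: 1; 3; 2; 4].
Proof.
case: t => [|a [|b [|c [|d [|e t]]]]] //= obs t_lt.
  exists [:: a; b; c; N], [::]; split; first exact: (subseq_refl [:: a; b; c; N]).
  by apply/reduce1324; exists a, b, c, N; split=> //; split; lia.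
case/orP: obs => obs.
  exists [:: c; d], [:: a; b]; split; first exact: (subseq_rcons [:: a; b; c; d] N).
  by apply/reduce1324; exists c, d, a, b; split=> //; split; lia.
exists [:: d], [:: a; b; c]; split; first exact: (subseq_rcons [:: a; b; c; d] N).
by apply/reduce1324; exists d, a, b, c; split=> //; split; lia.
Qed.

Lemma rot1324_obstruction a b c d k : [/\ a < c, c < b & b < d] ->
  exists s, [/\ subseq s (rot k [:: a; b; c; d]), obstruction s & last d s < d].
Proof.
move=> abcd; wlog lt_k : k / k < 4.
  move=> gen; have [|le_k] := ltnP k 4; first exact: gen.
  by rewrite rot_oversize //; apply: (gen 0).
case: k lt_k => [|[|[|[|//]]]] _; case: abcd => ac cb bd.
- by exists [:: a; b; c]; rewrite (prefix_subseq [:: a; b; c] [:: d]); split=> //=; lia.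
- by exists [:: b; c; d; a]; rewrite subseq_refl; split=> //=; lia.
- by exists [:: c; d; a; b]; rewrite subseq_refl; split=> //=; lia.
- by exists [:: a; b; c]; rewrite (suffix_subseq [:: d] [:: a; b; c]); split=> //=; lia.
Qed.

Lemma circ_avoids_rcons x N : all (fun y => y < N) x ->
  circ_avoids [:: 1; 3; 2; 4] (rcons x N) = admissible x.
Proof.
move=> /allP x_lt; apply/idP/idP.
  apply: contraR => /admissiblePn [t sub_t obs]; apply/circ_containsP.
  have t_lt : all (fun y => y < N) t by apply/allP => y /(mem_subseq sub_t) /x_lt.
  have [u [v [sub red]]] := obstruction_circ_occurrence obs t_lt.
  by exists u, v; split=> //; apply: subseq_trans sub _; rewrite -!cats1 subseq_cat2r.
apply: contraL => /circ_containsP [u [v [sub /reduce1324 [a [b [c [d [eq_uv abcd]]]]]]]].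
have [s [sub_s obs last_s]] := rot1324_obstruction (size u) abcd.
move: sub_s; rewrite -eq_uv rot_size_cat => /subseq_trans /(_ sub) sub_s.
have d_N : d <= N.
  have d_vu : d \in v ++ u by rewrite mem_cat orbC -mem_cat eq_uv !inE eqxx !orbT.
  have := mem_subseq sub d_vu.
  by rewrite mem_rcons inE => /orP [/eqP -> // | /x_lt /ltnW].
apply/admissiblePn; exists s => //; apply: subseq_rcons_neq sub_s _.
by case: s obs last_s => [//|y s] _ /=; rewrite neq_ltn => /leq_trans ->.
Qed.

Lemma perm_circ_avoiders m :
  perm_eq [seq pi <- circ_perms m.+1 | circ_avoids [:: 1; 3; 2; 4] pi]
          [seq rcons x m.+1 | x <- adm_perms m].
Proof.
apply: uniq_perm.
- by rewrite !filter_uniq ?permutations_uniq.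
- by rewrite (map_inj_uniq (@rcons_injl _ _)) adm_perms_uniq.
move=> pi; rewrite !mem_filter mem_permutations.
apply/and3P/mapP => [[avoid /eqP last_pi pi_perm] | [y]].
  case/lastP: pi avoid last_pi pi_perm => [_ _ /perm_size | x N]; first by rewrite size_iota.
  rewrite last_rcons => avoid N_eq x_perm; subst N.
  rewrite -cats1 perm_iota_max cats0 in x_perm.
  by exists x => //; rewrite mem_adm_perms x_perm -(@circ_avoids_rcons x m.+1) ?perm_iota_lt.
rewrite mem_adm_perms => /andP [y_perm y_adm] ->; split.
- by rewrite circ_avoids_rcons ?perm_iota_lt.
- by rewrite last_rcons.
- by rewrite -cats1 perm_iota_max cats0.
Qed.

Local Open Scope ring_scope.

Theorem theorem1 (n : nat) : (0 < n)%N ->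
  (size [seq pi <- circ_perms n | circ_avoids [:: 1%N; 3%N; 2%N; 4%N] pi])%:Z
     = fibz (2 * n%:Z - 3).
Proof.
case: n => [//|m] _; rewrite (perm_size (perm_circ_avoiders m)) size_map.
case: m => [|m]; first by rewrite size_adm_perms0.
rewrite size_adm_perms //.
by have -> : 2 * (m.+2)%:Z - 3 = Posz (2 * m.+1).-1 by lia.
Qed.
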